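(* A finite graph $G$ satisfies $\theta(G)=2$ if and only if $G$ is isomorphic to $K_2$ or to $\overline{K_2}$ (equivalently, $|V(G)|=2$).
   Context: All graphs are finite and simple. The distinguishing threshold $\theta(G)$ is the minimum $k$ such that every vertex coloring of $G$ using exactly $k$ colors is distinguishing (no non-identity automorphism maps every vertex to a vertex of the same color); equivalently $\theta(G)=1+\max\{c(\alpha):\alpha\in\mathrm{Aut}(G)\}$, where $c(\alpha)$ is the number of cycles of $\alpha$ as a permutation of $V(G)$ (fixed points count as cycles) and $c(\mathrm{id})=0$. *)

From mathcomp Require Import all_boot all_order all_fingroup.
Set Implicit Arguments. Unset Strict Implicit. Unset Printing Implicit Defensive.

(* A finite simple graph: vertex type T : finType, edge relation e : rel T,
   assumed symmetric and irreflexive (hypotheses in the theorem). *)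

Definition is_aut (T : finType) (e : rel T) (s : {perm T}) : bool :=
  [forall x, forall y, e (s x) (s y) == e x y].

Definition ncycles (T : finType) (s : {perm T}) : nat :=
  if s == 1%g then 0 else #|porbits s|.

Definition dist_threshold (T : finType) (e : rel T) : nat :=
  (\max_(s : {perm T} | is_aut e s) ncycles s).+1.

Definition graph_iso (T U : finType) (e : rel T) (f : rel U) : Prop :=
  exists g : T -> U, bijective g /\ forall x y, f (g x) (g y) = e x y.

Definition K2 : rel 'I_2 := fun i j => i != j.
Definition K2bar : rel 'I_2 := fun _ _ => false.

From mathcomp Require Import all_boot all_order all_fingroup.
Set Implicit Arguments. Unset Strict Implicit. Unset Printing Implicit Defensive.

(** A nontrivial automorphism with a single cycle runs through all vertices,
    x0, s x0, s^2 x0, ...  Because the graph is undirected and s-invariant, the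
    reflection s^i x0 |-> s^-i x0 is again an automorphism; on three or more
    vertices it fixes x0 but moves s x0, so it has at least two cycles. Hence
    theta(G) = 2 forces two vertices, and on two vertices the transposition is
    an automorphism with exactly one cycle. *)

Section Permutations.
Variable T : finType.
Implicit Types (s g h : {perm T}) (x y : T).

Lemma perm_neq1P s : reflect (exists x, s x != x) (s != 1%g).
Proof.
apply: (iffP idP) => [s_nid | [x sx] /=]; last first.
  by apply: contra sx => /eqP ->; rewrite perm1.
apply/existsP; apply: contraR s_nid => /existsPn s_fix.
by apply/eqP/permP => x; rewrite perm1; apply/eqP/negPn/s_fix.
Qed.

Lemma card_porbits_lt s : s != 1%g -> #|porbits s| < #|T|.
Proof.
case/perm_neq1P => x sx_x.
rewrite ltn_neqAle leq_imset_card andbT; apply: contra sx_x => /imset_injP inj.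
by apply/eqP/inj; rewrite ?inE // -[RHS](porbit_perm s 1) expg1.
Qed.

Lemma ncycles_le_card_pred s : ncycles s <= #|T|.-1.
Proof.
rewrite /ncycles; case: eqP => // /eqP s_nid.
by rewrite -ltnS (ltn_predK (card_porbits_lt s_nid)) card_porbits_lt.
Qed.

Lemma ncycles_gt0 s : s != 1%g -> 0 < ncycles s.
Proof.
move=> s_nid; have /perm_neq1P [x _] := s_nid.
rewrite /ncycles (negbTE s_nid) card_gt0.
by apply/set0Pn; exists (porbit s x); apply: imset_f.
Qed.

Lemma porbit_fix s x : s x = x -> porbit s x = [set x].
Proof.
move=> sx; apply/setP => y; rewrite inE; apply/porbitP/eqP => [[i ->]|->].
  by elim: i => [|i IHi]; rewrite ?expg0 ?perm1 // expgSr permM IHi.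
by exists 0; rewrite expg0 perm1.
Qed.

Lemma card_porbits_gt1 s x y : s x = x -> s y != y -> 1 < #|porbits s|.
Proof.
move=> sx sy; apply/card_gt1P; exists (porbit s x), (porbit s y).
split; try exact: imset_f.
rewrite eq_sym eq_porbit_mem porbit_fix // inE; apply: contra sy => /eqP ->.
by rewrite sx.
Qed.

Lemma card_porbit_le s x n : 0 < n -> (s ^+ n)%g x = x -> #|porbit s x| <= n.
Proof.
move=> n_gt0 snx; have /loopingP loop : looping s x n.
  by rewrite /looping -permX snx -(prednK n_gt0) mem_head.
rewrite -(size_traject s x n); apply: leq_trans (card_size _).
apply: subset_leq_card; apply/subsetP => _ /porbitP [i ->].
by rewrite permX loop.
Qed.

Lemma permV_eq g h x : commute g h -> g x = h x -> (g^-1)%g x = (h^-1)%g x.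
Proof.
move=> gh gh_x; apply: (@perm_inj _ (g * h)%g).
by rewrite {2}gh !permM !permKV gh_x.
Qed.

End Permutations.

Section Reflection.
Variables (T : finType) (s : {perm T}) (x0 : T).
Hypothesis s_trans : forall y, y \in porbit s x0.

Definition cycle_index y : nat :=
  if [pick i : 'I_#[s]%g | (s ^+ i)%g x0 == y] is Some i then i else 0.

Lemma cycle_indexK y : (s ^+ cycle_index y)%g x0 = y.
Proof.
rewrite /cycle_index; case: pickP => [i /eqP // | no_i].
have [i i_lt y_def] := porbitPmin (s_trans y).
by have := no_i (Ordinal i_lt); rewrite /= -y_def eqxx.
Qed.

Definition reflection_fun y := (s ^- cycle_index y)%g x0.

Lemma reflection_funE g : g \in <[s]>%g -> reflection_fun (g x0) = (g^-1)%g x0.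
Proof.
case/cycleP => k ->; apply: permV_eq; last exact: cycle_indexK.
exact/commuteX2/commute_refl.
Qed.

Lemma reflection_funK : involutive reflection_fun.
Proof.
move=> y; rewrite [reflection_fun y]/reflection_fun.
by rewrite reflection_funE ?groupV ?mem_cycle // invgK cycle_indexK.
Qed.

Definition reflection : {perm T} := perm (inv_inj reflection_funK).

Lemma reflection_fix : reflection x0 = x0.
Proof.
by rewrite permE -{1}[x0]perm1 reflection_funE ?group1 // invg1 perm1.
Qed.

Lemma reflection_moves : 2 < #|T| -> reflection (s x0) != s x0.
Proof.
apply: contraTneq; rewrite permE reflection_funE ?cycle_id // => sV_x0.
have s2_x0 : (s ^+ 2)%g x0 = x0 by rewrite expgSr expg1 permM -sV_x0 permKV.
rewrite -leqNgt; apply: leq_trans (card_porbit_le _ s2_x0) => //.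
by apply/subset_leq_card/subsetP => y _; exact: s_trans.
Qed.

End Reflection.

Lemma card2_mem_pair (T : finType) (x y z : T) :
  #|T| = 2 -> x != y -> (z == x) || (z == y).
Proof.
move=> T2 xy; have /subset_cardP pair_eqT : #|pred2 x y| = #|T|.
  by rewrite card2 xy.
by have := pair_eqT (subset_predT _) z.
Qed.

Section Graph.
Variables (T : finType) (e : rel T).
Hypotheses (e_sym : symmetric e) (e_irr : irreflexive e).
Implicit Types (s : {perm T}) (x y : T).

Lemma is_autP s : reflect (forall x y, e (s x) (s y) = e x y) (is_aut e s).
Proof.
apply: (iffP forallP) => [s_aut x y | s_aut x].
  by apply/eqP; move/forallP: (s_aut x).
by apply/forallP => y; rewrite s_aut.
Qed.

Lemma is_aut_expg s n : is_aut e s -> is_aut e (s ^+ n)%g.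
Proof.
move/is_autP => s_aut; apply/is_autP; elim: n => [|n IHn] x y.
  by rewrite expg0 !perm1.
by rewrite expgSr !permM s_aut IHn.
Qed.

Lemma ncycles_lt_dist_threshold s : is_aut e s -> ncycles s < dist_threshold e.
Proof. by move=> s_aut; rewrite ltnS; apply: leq_bigmax_cond. Qed.

Lemma dist_threshold_attained :
  exists2 s, is_aut e s & dist_threshold e = (ncycles s).+1.
Proof.
have aut1 : is_aut e 1%g by apply/is_autP => x y; rewrite !perm1.
have [|s s_aut max_s] := @eq_bigmax_cond _ (is_aut e) (@ncycles T).
  by apply/card_gt0P; exists 1%g.
by exists s; rewrite // /dist_threshold max_s.
Qed.

Lemma reflection_aut s x0 (s_trans : forall y, y \in porbit s x0) :
  is_aut e s -> is_aut e (reflection s_trans).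
Proof.
move=> s_aut; apply/is_autP => x y; rewrite !permE /reflection_fun.
set i := cycle_index s x0 x; set j := cycle_index s x0 y.
(* Shifting by s^(i+j) maps the pair (s^-i x0, s^-j x0) to (s^j x0, s^i x0). *)
move/is_autP: (is_aut_expg (i + j) s_aut) => <-.
by rewrite -!permM {2}addnC !expgD !mulKg !(cycle_indexK s_trans); exact: e_sym.
Qed.

Lemma two_vertex_graph :
  #|T| = 2 -> e =2 (fun x y => x != y) \/ e =2 (fun _ _ => false).
Proof.
move=> T2.
case: (pickP [pred xy : T * T | e xy.1 xy.2]) => [[a b] /= e_ab | no_edge].
  left=> x y; have ab : a != b by apply: contraTneq e_ab => ->; rewrite e_irr.
  have [<-|xy] := eqVneq x y; first by rewrite e_irr.
  move: (card2_mem_pair x T2 ab) (card2_mem_pair y T2 ab) xy.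
  by do 2![case/orP=> /eqP->]; rewrite ?eqxx // e_sym.
by right=> x y; exact: (no_edge (x, y)).
Qed.

Lemma two_vertex_is_aut s : #|T| = 2 -> is_aut e s.
Proof.
move=> T2; apply/is_autP => x y.
by case: (two_vertex_graph T2) => e_def; rewrite !e_def ?(inj_eq perm_inj).
Qed.

Lemma two_vertex_dist_threshold : #|T| = 2 -> dist_threshold e = 2.
Proof.
move=> T2; apply/eqP; rewrite eqn_leq; apply/andP; split.
  rewrite ltnS; apply/bigmax_leqP => s _.
  by have := ncycles_le_card_pred s; rewrite T2.
have /card_gt1P [x [y [_ _ xy]]] : 1 < #|T| by rewrite T2.
have swap_nid : tperm x y != 1%g.
  by apply/perm_neq1P; exists x; rewrite tpermL eq_sym.
have swap_aut := two_vertex_is_aut (tperm x y) T2.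
apply: leq_ltn_trans (ncycles_gt0 swap_nid) _.
exact: ncycles_lt_dist_threshold swap_aut.
Qed.

Lemma two_vertex_iso : #|T| = 2 -> graph_iso e K2 \/ graph_iso e K2bar.
Proof.
move=> T2; pose g x := cast_ord T2 (enum_rank x).
have g_inj : injective g by move=> x y /cast_ord_inj/enum_rank_inj.
have g_bij : bijective g by apply: inj_card_bij g_inj _; rewrite card_ord T2.
case: (two_vertex_graph T2) => e_def; [left | right]; exists g.
  by split=> // x y; rewrite e_def /K2 (inj_eq g_inj).
by split=> // x y; rewrite e_def.
Qed.

Lemma dist_threshold2_card : dist_threshold e = 2 -> #|T| = 2.
Proof.
move=> thr2; have [s s_aut thr_s] := dist_threshold_attained.
have s_cycles : ncycles s = 1 by move: thr_s; rewrite thr2 => -[].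
have s_nid : s != 1%g.
  by apply: contra_eq_neq s_cycles => ->; rewrite /ncycles eqxx.
rewrite /ncycles (negbTE s_nid) in s_cycles.
have /perm_neq1P [x0 _] := s_nid.
have s_trans y : y \in porbit s x0.
  have /card_le1_eqP same_orbit : #|porbits s| <= 1 by rewrite s_cycles.
  by rewrite -(same_orbit (porbit s x0) (porbit s y)) ?imset_f ?porbit_id.
have T_gt1 : 1 < #|T| by rewrite -s_cycles card_porbits_lt.
apply/eqP; rewrite eqn_leq T_gt1 andbT leqNgt; apply/negP => T_gt2.
have r_moves := reflection_moves s_trans T_gt2.
have r_nid : reflection s_trans != 1%g by apply/perm_neq1P; exists (s x0).
have := ncycles_lt_dist_threshold (reflection_aut s_trans s_aut).
rewrite thr2 /ncycles (negbTE r_nid) ltnNge.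
by rewrite (card_porbits_gt1 (reflection_fix s_trans) r_moves).
Qed.

End Graph.

Theorem mainTheorem4 (T : finType) (e : rel T)
  (e_sym : symmetric e) (e_irr : irreflexive e) :
  dist_threshold e = 2 <-> (graph_iso e K2 \/ graph_iso e K2bar).
Proof.
split=> [/(dist_threshold2_card e_sym) /(two_vertex_iso e_sym e_irr) // | iso].
apply: two_vertex_dist_threshold e_sym e_irr _.
by case: iso => -[g [/bij_eq_card -> _]]; rewrite card_ord.
Qed.
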